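(* Let $n\ge3$ and $A\subseteq[n-1]$ nonempty, let $w=\max A$ and $A'=A\setminus\{w\}$. If $1<w<n-1$, then $$f_n(A)=2f_{n-1}(A)+f_{n-1}(A')-\sum_{j=w-1}^{n-2}f_j(A').$$
   Context: For $m\ge1$ and a set $B$ of positive integers, $f_m(B)$ denotes the number of linear orders $q$ on $[m]$ such that for every triple $i<j<k$ in $[m]$: if $j\in B$ then $i$ is not ranked last among $\{i,j,k\}$ in $q$, and if $j\notin B$ then $k$ is not ranked first among $\{i,j,k\}$ in $q$ (i.e. the size of the set-alternating domain on $[m]$ generated by $B\cap[m]$). *)

From mathcomp Require Import all_boot all_algebra all_fingroup.
Set Implicit Arguments. Unset Strict Implicit. Unset Printing Implicit Defensive.

(* A linear order q on [m] = {1,...,m} is encoded as a permutation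
   q : {perm 'I_m}; the ordinal x : 'I_m stands for the integer x+1,
   and q x is the rank (position) of x+1 in the order (smaller = earlier). *)

Definition triple_ok (m : nat) (B : pred nat) (q : {perm 'I_m}) (i j k : 'I_m) : bool :=
  if B (val j).+1
  then ~~ ((q j < q i) && (q k < q i))
  else ~~ ((q k < q i) && (q k < q j)).

Definition set_alt_ok (m : nat) (B : pred nat) (q : {perm 'I_m}) : bool :=
  [forall i : 'I_m, forall j : 'I_m, forall k : 'I_m,
     ((i < j) && (j < k)) ==> triple_ok B q i j k].

Definition f (m : nat) (B : pred nat) : nat :=
  #|[set q : {perm 'I_m} | set_alt_ok B q]|.

From mathcomp Require Import all_boot all_algebra all_fingroup zify.
Set Implicit Arguments. Unset Strict Implicit. Unset Printing Implicit Defensive.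

(* Encode a linear order on {0, ..., M-1} by the list of its elements by
   increasing rank, let P be A shifted down by one and W = max P.  Classify
   the orders by their last element l.  If l < W, the triple (l, W, M-1) is
   violated.  If l > W, no element above l lies in P, which forces the order to
   be t ++ [l+1, ..., M-1] ++ [l] for an arbitrary valid order t on
   {0, ..., l-1}.  If l = W, deleting W and closing the gap gives a valid order
   for P' = P minus W on M-1 points in which the elements >= W appear in
   increasing order; let g(M-1) count these.  Hence
     f(P, M+1) = g(M) + sum_(W < l <= M) f(P, l).
   The same classification for P', all of whose elements lie below W, gives
     g(M+1) + sum_(W <= l <= M) f(P', l) = g(M) + f(P', M+1),
   and eliminating g between these identities yields the recurrence. *)

Implicit Types (P Q : pred nat) (s t : seq nat) (l M W : nat).

Lemma count_eq_bij (T U : eqType) (s : seq T) (t : seq U) (a : pred T) (b : pred U)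
    (h : T -> U) :
  uniq s -> uniq t -> {in filter a s &, injective h} ->
  {in filter a s, forall x, h x \in filter b t} ->
  {subset filter b t <= map h (filter a s)} ->
  count a s = count b t.
Proof.
move=> us ut h_inj h_to h_onto; rewrite -!size_filter -(size_map h).
apply: perm_size; apply: uniq_perm; rewrite ?(map_inj_in_uniq h_inj) ?filter_uniq //.
by move=> y; apply/idP/idP => [/mapP[x xs ->] | /h_onto]; first exact: h_to.
Qed.

Lemma index_rcons_in (T : eqType) (s : seq T) x y :
  x \in s -> index x (rcons s y) = index x s.
Proof. by move=> xs; rewrite -cats1 index_cat xs. Qed.

Lemma index_rcons_last (T : eqType) (s : seq T) y :
  y \notin s -> index y (rcons s y) = size s.
Proof. by move=> ys; rewrite -cats1 index_cat (negbTE ys) /= eqxx addn0. Qed.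

Lemma index_iota_in (a n x : nat) : a <= x < a + n -> index x (iota a n) = x - a.
Proof.
move=> xin; have {1}-> : x = nth 0 (iota a n) (x - a) by rewrite nth_iota; lia.
by rewrite index_uniq ?iota_uniq ?size_iota //; lia.
Qed.

Lemma pairwise_index (T : eqType) (r : rel T) (s : seq T) : uniq s ->
  (forall x y, x \in s -> y \in s -> index x s < index y s -> r x y) -> pairwise r s.
Proof.
case: s => [//| x0 s'] us H; apply/(pairwiseP x0) => i j ilt jlt ij.
by apply: H; rewrite ?mem_nth ?index_uniq.
Qed.

Lemma pairwise_filter_cat (T : eqType) (a : pred T) (s : seq T) :
  pairwise (fun x y => a x || ~~ a y) s -> s = filter a s ++ filter (predC a) s.
Proof.
elim: s => //= x s IH /andP[xs /IH es].
case: ifP => ax /=; first by rewrite -es.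
have nas : all (predC a) s by move: xs; rewrite ax.
rewrite (all_filterP nas) (@eq_in_filter _ a pred0) ?filter_pred0 //.
by move=> y /(allP nas) /negbTE.
Qed.

Definition perms M := permutations (iota 0 M).

Lemma permsP M s : reflect (uniq s /\ forall x, (x \in s) = (x < M)) (s \in perms M).
Proof.
rewrite mem_permutations; apply: (iffP idP) => [pe | [us ms]].
  by split=> [|x]; rewrite ?(perm_uniq pe) ?iota_uniq // (perm_mem pe) mem_iota.
by apply: uniq_perm; rewrite ?iota_uniq // => x; rewrite ms mem_iota.
Qed.

Lemma perms_uniq M : uniq (perms M).
Proof. exact: permutations_uniq. Qed.

Lemma perms_size M s : s \in perms M -> size s = M.
Proof. by rewrite mem_permutations => /perm_size; rewrite size_iota. Qed.

Lemma rcons_permsP M s l :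
  reflect [/\ l < M, uniq s & forall x, (x \in s) = (x < M) && (x != l)]
          (rcons s l \in perms M).
Proof.
apply: (iffP (permsP _ _)) => [[] | [lM us ms]]; rewrite rcons_uniq.
  move=> /andP[ls us] ms; split=> // [|x]; first by rewrite -ms mem_rcons mem_head.
  by rewrite -ms mem_rcons in_cons; case: (eqVneq x l) => [->|_] /=; rewrite ?(negbTE ls) ?andbT.
split=> [|x]; first by rewrite ms eqxx andbF.
by rewrite mem_rcons in_cons ms; case: (eqVneq x l) => [->|_] /=; rewrite ?andbT.
Qed.

(* The rank of x in the order s is [index x s]; x stands for x+1, so [Q x]
   means x+1 \in B. *)
Definition alt_triple Q s (i j k : nat) : bool :=
  if Q j then ~~ ((index j s < index i s) && (index k s < index i s))
  else ~~ ((index k s < index i s) && (index k s < index j s)).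

Definition alt_ok Q s : bool :=
  all (fun i => all (fun j => all (fun k => (i < j < k) ==> alt_triple Q s i j k) s) s) s.

Lemma alt_okP Q s :
  reflect (forall i j k, i \in s -> j \in s -> k \in s -> i < j < k -> alt_triple Q s i j k)
          (alt_ok Q s).
Proof.
apply: (iffP allP) => [H i j k iS jS kS ijk | H i iS].
  by move/allP: (H i iS) => /(_ j jS) /allP /(_ k kS) /implyP; apply.
by apply/allP => j jS; apply/allP => k kS; apply/implyP; exact: H.
Qed.

Definition ndom Q M : nat := count (alt_ok Q) (perms M).

Section SeqOfPerm.
Variable m : nat.

Definition seq_of_perm (q : {perm 'I_m}) : seq nat :=
  [seq val ((q^-1)%g r) | r <- enum 'I_m].

Lemma index_seq_of_perm q x : index (val x) (seq_of_perm q) = q x.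
Proof.
rewrite /seq_of_perm map_comp (index_map val_inj) -{1}(permK q x).
by rewrite (index_map (@perm_inj _ _)) index_enum_ord.
Qed.

Lemma seq_of_perm_perms q : seq_of_perm q \in perms m.
Proof.
apply/permsP; split=> [|y].
  by rewrite map_inj_uniq ?enum_uniq // => x1 x2 /val_inj /perm_inj.
apply/mapP/idP => [[r _ ->] | ym]; first exact: ltn_ord.
by exists (q (Ordinal ym)); rewrite ?mem_enum // permK.
Qed.

Lemma seq_of_perm_inj : injective seq_of_perm.
Proof.
by move=> q1 q2 e; apply/permP => x; apply: val_inj => /=; rewrite -!index_seq_of_perm e.
Qed.

Lemma seq_of_perm_onto s : s \in perms m -> exists q, s = seq_of_perm q.
Proof.
move=> sp; have [us ms] := permsP _ _ sp; have sz := perms_size sp.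
have nth_lt (r : 'I_m) : nth 0 s r < m by rewrite -ms mem_nth ?sz.
have g_inj : injective (fun r => Ordinal (nth_lt r)).
  by move=> r1 r2 /(congr1 val) /= /eqP; rewrite nth_uniq ?sz // => /eqP /val_inj.
exists (perm g_inj)^-1%g; rewrite /seq_of_perm invgK.
rewrite -{1}(mkseq_nth 0 s) sz /mkseq -val_enum_ord -map_comp.
by apply: eq_map => r; rewrite /= permE.
Qed.

Lemma alt_ok_seq_of_perm A q :
  alt_ok (fun x => A x.+1) (seq_of_perm q) = set_alt_ok A q.
Proof.
have mem_sq y : (y \in seq_of_perm q) = (y < m) by case/permsP: (seq_of_perm_perms q).
apply/alt_okP/forallP => [H i | H i j k].
  apply/forallP => j; apply/forallP => k; apply/implyP => ijk.
  have := H i j k; rewrite !mem_sq !ltn_ord => /(_ isT isT isT ijk).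
  by rewrite /alt_triple /triple_ok !index_seq_of_perm.
rewrite !mem_sq => im jm km ijk.
move/forallP: (H (Ordinal im)) => /(_ (Ordinal jm)) /forallP /(_ (Ordinal km)).
by move=> /implyP /(_ ijk); rewrite /alt_triple /triple_ok -!(index_seq_of_perm q (Ordinal _)).
Qed.

End SeqOfPerm.

Lemma f_count m A : f m A = ndom (fun x => A x.+1) m.
Proof.
rewrite /f /ndom cardsE cardE /enum_mem size_filter -enumT.
rewrite (@eq_count _ _ (set_alt_ok A)) => [|q]; last by rewrite inE.
apply: (count_eq_bij (h := @seq_of_perm m)); rewrite ?enum_uniq ?perms_uniq //.
- by move=> q1 q2 _ _; apply: seq_of_perm_inj.
- by move=> q; rewrite !mem_filter alt_ok_seq_of_perm seq_of_perm_perms andbT => /andP[].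
- move=> s; rewrite mem_filter => /andP[oks /seq_of_perm_onto[q sq]].
  by apply/mapP; exists q; rewrite // mem_filter mem_enum -alt_ok_seq_of_perm -sq oks.
Qed.

Lemma eq_alt_ok Q1 Q2 : Q1 =1 Q2 -> alt_ok Q1 =1 alt_ok Q2.
Proof. by move=> eQ s; rewrite /alt_ok /alt_triple; do 3!apply: eq_all => ?; rewrite eQ. Qed.

Lemma eq_ndom Q1 Q2 : Q1 =1 Q2 -> ndom Q1 =1 ndom Q2.
Proof. by move=> eQ M; apply: eq_count; apply: eq_alt_ok. Qed.

Lemma alt_ok_catl Q s t : alt_ok Q (s ++ t) -> alt_ok Q s.
Proof.
move/alt_okP => H; apply/alt_okP => i j k iS jS kS ijk.
have := H i j k; rewrite !mem_cat iS jS kS => /(_ isT isT isT ijk).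
by rewrite /alt_triple !index_cat iS jS kS.
Qed.

Lemma alt_ok_map Q (g : nat -> nat) s :
  {mono g : x y / x <= y} -> alt_ok Q (map g s) = alt_ok (fun x => Q (g x)) s.
Proof.
move=> g_mono; have g_inj := incn_inj g_mono.
have g_ltn x y : (g x < g y) = (x < y) by rewrite !ltnNge g_mono.
apply/alt_okP/alt_okP => H.
  move=> i j k iS jS kS ijk; have := H (g i) (g j) (g k).
  rewrite !(mem_map g_inj) iS jS kS !g_ltn => /(_ isT isT isT ijk).
  by rewrite /alt_triple !(index_map g_inj).
move=> _ _ _ /mapP[i iS ->] /mapP[j jS ->] /mapP[k kS ->]; rewrite !g_ltn => ijk.
by have := H i j k iS jS kS ijk; rewrite /alt_triple !(index_map g_inj).
Qed.

Lemma alt_ok_rconsP Q s l : l \notin s ->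
  alt_ok Q (rcons s l) <->
  [/\ alt_ok Q s,
      forall j k, j \in s -> k \in s -> l < j < k -> ~~ Q j && (index j s < index k s) &
      ~~ Q l -> forall i k, i \in s -> k \in s -> i < l < k -> index i s < index k s].
Proof.
move=> ls; have idx_l : index l (rcons s l) = size s := index_rcons_last ls.
have idx_s x : x \in s -> index x (rcons s l) = index x s := @index_rcons_in _ s x l.
have idx_lt x : x \in s -> index x s < size s by rewrite index_mem.
have idx_neq x y : x \in s -> y \in s -> x < y -> index x s != index y s.
  by move=> xs ys; apply: contraTneq => /(index_inj 0 xs ys) ->; rewrite ltnn.
have mem_l x : x \in s -> x \in rcons s l by rewrite mem_rcons in_cons => ->; rewrite orbT.
have l_mem : l \in rcons s l by rewrite mem_rcons mem_head.
split=> [ok | [oks above below]].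
  move/alt_okP: (ok) => H; split; first by move: ok; rewrite -cats1; apply: alt_ok_catl.
    move=> j k js ks ljk; have := H l j k l_mem (mem_l _ js) (mem_l _ ks) ljk.
    have := idx_neq j k js ks (proj2 (andP ljk)); have := idx_lt _ js; have := idx_lt _ ks.
    by rewrite /alt_triple idx_l !idx_s //; case: (Q j) => /=; lia.
  move=> nQl i k iS ks ilk; have := H i l k (mem_l _ iS) l_mem (mem_l _ ks) ilk.
  have := idx_neq i k iS ks (ltn_trans (proj1 (andP ilk)) (proj2 (andP ilk))).
  by have := idx_lt _ iS; rewrite /alt_triple (negbTE nQl) idx_l !idx_s //; lia.
move/alt_okP: oks => oks; apply/alt_okP => i j k.
rewrite !mem_rcons !in_cons.
case/orP => [/eqP -> | iS]; case/orP => [/eqP -> | jS]; case/orP => [/eqP -> | kS] //; try lia.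
- move=> ljk; have := above j k jS kS ljk.
  by rewrite /alt_triple idx_l !idx_s //; case: (Q j) => /=; lia.
- move=> ilk; rewrite /alt_triple idx_l !idx_s //; have := idx_lt _ iS.
  by case: (boolP (Q l)) => [_ | /below/(_ i k iS kS ilk)]; lia.
- by move=> ijl; rewrite /alt_triple idx_l !idx_s //; have := idx_lt _ iS; case: (Q j) => /=; lia.
- by move=> ijk; have := oks i j k iS jS kS ijk; rewrite /alt_triple !idx_s.
Qed.

Lemma alt_ok_rcons_max Q s L : (forall x, x \in s -> x < L) -> ~~ Q L ->
  alt_ok Q (rcons s L) = alt_ok Q s.
Proof.
move=> sL nQL; have Ls : L \notin s by apply/negP => /sL; rewrite ltnn.
apply/idP/idP => [/(alt_ok_rconsP Q Ls)[] // | oks]; apply/(alt_ok_rconsP Q Ls).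
by split=> // [j k _ /sL | _ i k _ /sL]; lia.
Qed.

Lemma alt_ok_cat_iota Q t l (n : nat) :
  (forall x, Q x -> x < l) -> (forall x, x \in t -> x < l) ->
  alt_ok Q t -> alt_ok Q (t ++ iota l.+1 n ++ [:: l]).
Proof.
move=> Ql tl okt; have nQ x : l <= x -> ~~ Q x by move=> lx; apply/negP => /Ql; lia.
have ok_up m : alt_ok Q (t ++ iota l.+1 m).
  elim: m => [|m IH]; first by rewrite cats0.
  rewrite -[m.+1]addn1 iotaD cats1 -rcons_cat alt_ok_rcons_max ?nQ //; last lia.
  by move=> x; rewrite mem_cat mem_iota => /orP[/tl|]; lia.
have mem_up x : (x \in t ++ iota l.+1 n) = (x \in t) || (l < x < l.+1 + n).
  by rewrite mem_cat mem_iota.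
have l_up : l \notin t ++ iota l.+1 n by rewrite mem_up; apply/negP => /orP[/tl|]; lia.
have idx_t x : x \in t -> index x (t ++ iota l.+1 n) = index x t by move=> xt; rewrite index_cat xt.
have idx_up x : l < x < l.+1 + n -> index x (t ++ iota l.+1 n) = size t + (x - l.+1).
  move=> xu; rewrite index_cat index_iota_in //.
  by case: ifP => // /tl; lia.
rewrite catA cats1; apply/(alt_ok_rconsP Q l_up); split=> // [j k | _ i k].
  rewrite !mem_up => /orP[/tl|ju]; first lia; move=> /orP[/tl|ku]; first lia.
  by move=> ljk; rewrite nQ ?idx_up //=; lia.
rewrite !mem_up => /orP[it|]; last lia; move=> /orP[/tl|ku]; first lia.
by move=> ilk; rewrite idx_t // idx_up //; apply: leq_trans (leq_addr _ _); rewrite index_mem.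
Qed.

Lemma alt_ok_rcons_shape Q s l M : (forall x, Q x -> x < l) ->
  rcons s l \in perms M -> alt_ok Q (rcons s l) ->
  s = filter (fun x => x < l) s ++ iota l.+1 (M - l.+1).
Proof.
move=> Ql /rcons_permsP[lM us ms] ok.
have ls : l \notin s by rewrite ms eqxx andbF.
have [_ above below] := (alt_ok_rconsP Q ls).1 ok.
have nQl : ~~ Q l by apply/negP => /Ql; rewrite ltnn.
(* [below]: everything under l precedes everything over l; [above]: the
   elements over l come in increasing order. *)
have pw : pairwise (fun x y => (x < l) || (x < y)) s.
  apply: pairwise_index => // x y xs ys xy.
  case: (ltnP x l) => //= lex; have lx : l < x by move: xs; rewrite ms; lia.
  case: (ltngtP x y) => // [yx | exy]; last by rewrite exy ltnn in xy.
  case: (ltngtP y l) => [yl | ly | yl]; last by move: ys; rewrite yl (negbTE ls).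
    by have := below nQl y x ys xs; rewrite yl lx => /(_ isT); lia.
  by have := above y x ys xs; rewrite ly yx => /(_ isT) /andP[_]; lia.
rewrite {1}(@pairwise_filter_cat _ (fun x => x < l) s (sub_pairwise _ pw)) => [|x y]; last lia.
congr (_ ++ _); apply: (irr_sorted_eq ltn_trans ltnn); last first.
- by move=> x; rewrite mem_filter mem_iota ms /=; lia.
- exact: iota_ltn_sorted.
rewrite sorted_pairwise; last exact: ltn_trans.
apply: (sub_in_pairwise _ (filter_all _ _) (pairwise_filter _ pw)) => x y /=.
by rewrite !inE /=; lia.
Qed.

Lemma alt_ok_last_lt P W M s :
  P W -> W < M.-1 -> s \in perms M -> last 0 s < W -> ~~ alt_ok P s.
Proof.
move=> PW; case/lastP: s => [|s l]; first by move=> + /perms_size M0; rewrite -M0.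
move=> WM /rcons_permsP[lM _ ms].
rewrite last_rcons => lW; have ls : l \notin s by rewrite ms eqxx andbF.
apply/negP => /(alt_ok_rconsP P ls)[_ above _].
have lWM : l < W < M.-1 by lia.
have Ws : W \in s by rewrite ms; lia.
have Ms : M.-1 \in s by rewrite ms; lia.
by case/andP: (above W M.-1 Ws Ms lWM); rewrite PW.
Qed.

Definition incr_above W s : bool :=
  all (fun x => all (fun y => (W <= x < y) ==> (index x s < index y s)) s) s.

Lemma incr_aboveP W s :
  reflect (forall x y, x \in s -> y \in s -> W <= x < y -> index x s < index y s)
          (incr_above W s).
Proof.
apply: (iffP allP) => [H x y xs ys Wxy | H x xs].
  by move/allP: (H x xs) => /(_ y ys) /implyP; apply.
by apply/allP => y ys; apply/implyP; exact: H.
Qed.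

Definition ndom_incr Q W M : nat :=
  count (fun s => alt_ok Q s && incr_above W s) (perms M).

Lemma incr_above_rcons_max W s L : (forall x, x \in s -> x < L) ->
  incr_above W (rcons s L) = incr_above W s.
Proof.
move=> sL; have Ls : L \notin s by apply/negP => /sL; rewrite ltnn.
have mem_s x : x \in s -> x \in rcons s L by rewrite mem_rcons in_cons => ->; rewrite orbT.
apply/incr_aboveP/incr_aboveP => H x y.
  by move=> xs ys Wxy; have := H x y (mem_s _ xs) (mem_s _ ys) Wxy; rewrite !index_rcons_in.
rewrite !mem_rcons !in_cons => /orP[/eqP -> | xs] /orP[/eqP -> | ys] Wxy; try lia.
- by have := sL _ ys; lia.
- by rewrite index_rcons_in // index_rcons_last // index_mem.
- by rewrite !index_rcons_in //; apply: H.
Qed.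

Lemma incr_above_last_lt Q W M s :
  s \in perms M -> alt_ok Q s -> last 0 s < W -> incr_above W s.
Proof.
case/lastP: s => [//| s l] /rcons_permsP[_ _ ms] ok; rewrite last_rcons => lW.
have ls : l \notin s by rewrite ms eqxx andbF.
have [_ above _] := (alt_ok_rconsP Q ls).1 ok.
apply/incr_aboveP => x y; rewrite !mem_rcons !in_cons.
move=> /orP[/eqP -> | xs] /orP[/eqP -> | ys] Wxy; try lia.
have lxy : l < x < y by lia.
by rewrite !index_rcons_in //; case/andP: (above x y xs ys lxy).
Qed.

Lemma incr_above_last_ge W M s : s \in perms M -> W <= last 0 s < M.-1 ->
  ~~ incr_above W s.
Proof.
case/lastP: s => [|s l]; first by move=> /perms_size <-; rewrite /= ltnn andbF.
move=> /rcons_permsP[lM _ ms]; rewrite last_rcons => Wl.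
have ls : l \notin s by rewrite ms eqxx andbF.
have l1s : l.+1 \in s by rewrite ms; lia.
apply/negP => /incr_aboveP /(_ l l.+1); rewrite !mem_rcons mem_head in_cons l1s orbT.
rewrite index_rcons_last // index_rcons_in // => /(_ isT isT _) lt.
by have := index_mem l.+1 s; rewrite l1s ltnNge ltnW ?lt //; lia.
Qed.

Lemma perms_rcons_bump W M t : W <= M ->
  (rcons (map (bump W) t) W \in perms M.+1) = (t \in perms M).
Proof.
move=> WM; have bump_inj := can_inj (bumpK W).
apply/rcons_permsP/permsP => [[_ ut mt] | [ut mt]].
  split=> [|y]; first by rewrite -(map_inj_uniq bump_inj).
  by rewrite -(mem_map bump_inj) mt eq_sym neq_bump andbT /bump; lia.
split=> [||x]; [lia | by rewrite map_inj_uniq |].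
case: (eqVneq x W) => [-> | xW] /=.
  by rewrite andbF; apply/negbTE/mapP => -[y _ /eqP]; rewrite (negbTE (neq_bump W y)).
rewrite andbT -{1}(@unbumpK W x) ?inE // (mem_map bump_inj) mt /unbump; lia.
Qed.

Lemma alt_ok_rcons_bump P W t : P W -> (forall x, P x -> x <= W) ->
  alt_ok P (rcons (map (bump W) t) W) = alt_ok (predD1 P W) t && incr_above W t.
Proof.
move=> PW PleW; have bump_mono : {mono bump W : x y / x <= y} := leq_bump2 W.
have bump_inj := incn_inj bump_mono.
have Wt : W \notin map (bump W) t by apply/mapP => -[y _ /eqP]; rewrite (negbTE (neq_bump W y)).
have P_bump : (fun x => P (bump W x)) =1 predD1 P W.
  move=> x; rewrite /= /bump; case: leqP => Wx; last by rewrite add0n (ltn_eqF Wx).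
  by rewrite add1n; apply/idP/andP => [/PleW le | [xW /PleW le]]; exfalso; lia.
apply/idP/andP => [/(alt_ok_rconsP P Wt)[oks above _] | [okt incr]].
  split; first by rewrite -(eq_alt_ok P_bump) -alt_ok_map.
  apply/incr_aboveP => x y xt yt Wxy.
  have Wb : W < bump W x < bump W y by rewrite /bump; lia.
  by have /andP[_] := above _ _ (map_f _ xt) (map_f _ yt) Wb; rewrite !(index_map bump_inj).
apply/(alt_ok_rconsP P Wt); split; first by rewrite alt_ok_map // (eq_alt_ok P_bump).
  move=> _ _ /mapP[x xt ->] /mapP[y yt ->] Wxy; apply/andP; split.
    by apply/negP => /PleW; lia.
  by rewrite !(index_map bump_inj); apply: (incr_aboveP _ _ incr) => //; rewrite /bump in Wxy; lia.
by rewrite PW.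
Qed.

Lemma count_perms_by_last (a : pred (seq nat)) M : 0 < M ->
  count a (perms M) = \sum_(0 <= l < M) count (fun s => a s && (last 0 s == l)) (perms M).
Proof.
move=> M0; have: {in perms M, forall s, last 0 s < M}.
  move=> s /permsP[_ ms]; rewrite -ms.
  by case/lastP: s ms => [|s l] ms; rewrite ?last_rcons ?mem_rcons ?mem_head // ms.
elim: (perms M) => [|s L IH] lastM; first by rewrite big1.
rewrite /= big_split /= -IH => [|s' s'L]; last by apply: lastM; rewrite in_cons s'L orbT.
congr (_ + _); rewrite (bigD1_seq (last 0 s)) ?iota_uniq ?mem_index_iota ?lastM ?mem_head //=.
by rewrite eqxx andbT big1 ?addn0 // => l /negbTE; rewrite eq_sym => ->; rewrite andbF.
Qed.

Lemma count_last_above Q (R : pred (seq nat)) M l :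
  (forall x, Q x -> x < l) -> l < M ->
  count (fun s => (alt_ok Q s && R s) && (last 0 s == l)) (perms M) =
  count (fun t => alt_ok Q t && R (t ++ iota l.+1 (M - l.+1) ++ [:: l])) (perms l).
Proof.
move=> Ql lM; set h := fun t => t ++ iota l.+1 (M - l.+1) ++ [:: l].
have h_rcons t : h t = rcons (t ++ iota l.+1 (M - l.+1)) l by rewrite /h catA cats1.
have h_perms t : t \in perms l -> h t \in perms M.
  case/permsP => ut mt; rewrite h_rcons; apply/rcons_permsP; split=> // [|x].
    by rewrite cat_uniq ut iota_uniq andbT /=; apply/hasPn => x; rewrite mem_iota mt; lia.
  by rewrite mem_cat mt mem_iota; lia.
symmetry; apply: (count_eq_bij (h := h)); rewrite ?perms_uniq //.
- move=> t1 t2; rewrite !mem_filter => /andP[_ /perms_size s1] /andP[_ /perms_size s2] /eqP.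
  by rewrite eqseq_cat ?s1 ?s2 // => /andP[/eqP].
- move=> t; rewrite !mem_filter => /andP[/andP[okt Rt] tp].
  rewrite h_perms // Rt alt_ok_cat_iota // ?andbT; last by move=> x; case/permsP: tp => _ ->.
  by rewrite h_rcons last_rcons eqxx.
move=> s; rewrite mem_filter => /andP[/andP[/andP[oks Rs] /eqP ls] sp].
case/lastP: s => [|s z] in sp oks Rs ls *; first by move: (perms_size sp) lM => <-.
rewrite last_rcons in ls; subst z; set t := filter (fun x => x < l) s.
have es : rcons s l = h t by rewrite h_rcons {1}(alt_ok_rcons_shape Ql sp oks).
apply/mapP; exists t => //; rewrite mem_filter -/(h t) -es Rs andbT.
apply/andP; split; first by move: oks; rewrite es; apply: alt_ok_catl.
case/rcons_permsP: sp => _ us ms; apply/permsP; split; first exact: filter_uniq.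
by move=> x; rewrite mem_filter ms; lia.
Qed.

Lemma count_last_above_ndom Q M l : (forall x, Q x -> x < l) -> l < M ->
  count (fun s => alt_ok Q s && (last 0 s == l)) (perms M) = ndom Q l.
Proof.
move=> Ql lM; have := count_last_above predT Ql lM.
rewrite (eq_count (a2 := fun s => alt_ok Q s && (last 0 s == l))) => [->|s]; last by rewrite andbT.
by apply: eq_count => t; rewrite andbT.
Qed.

Lemma count_last_max P W M : P W -> (forall x, P x -> x <= W) -> W <= M ->
  count (fun s => alt_ok P s && (last 0 s == W)) (perms M.+1) = ndom_incr (predD1 P W) W M.
Proof.
move=> PW PleW WM; set h := fun t => rcons (map (bump W) t) W.
symmetry; apply: (count_eq_bij (h := h)); rewrite ?perms_uniq //.
- move=> t1 t2 _ _ e; apply: (inj_map (can_inj (bumpK W))); exact: rcons_injl e.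
- move=> t; rewrite !mem_filter => /andP[okt tp].
  by rewrite /h perms_rcons_bump // tp alt_ok_rcons_bump // okt last_rcons eqxx.
move=> s; rewrite mem_filter => /andP[/andP[oks /eqP ls] sp].
case/lastP: s => [|s z] in sp oks ls *; first by have := perms_size sp.
rewrite last_rcons in ls; subst z.
have Ws : W \notin s by case/rcons_permsP: sp => _ _ ->; rewrite eqxx andbF.
have es : s = map (bump W) (map (unbump W) s).
  rewrite -map_comp map_id_in // => x xs /=; rewrite unbumpK // inE.
  by apply: contraNneq Ws => <-.
apply/mapP; exists (map (unbump W) s); last by rewrite /h -es.
by rewrite mem_filter -(@perms_rcons_bump W M _ WM) -(@alt_ok_rcons_bump P W _ PW PleW) -es oks sp.
Qed.

Lemma ndom_succ P W M : P W -> (forall x, P x -> x <= W) -> W < M ->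
  ndom P M.+1 = ndom_incr (predD1 P W) W M + \sum_(W.+1 <= l < M.+1) ndom P l.
Proof.
move=> PW PleW WM.
rewrite /ndom (count_perms_by_last _ (ltn0Sn M)) (@big_cat_nat _ _ _ W) //=; last lia.
rewrite big1_seq ?add0n => [|l]; last first.
  rewrite mem_index_iota => /andP[_ lW]; rewrite (eq_in_count (a2 := pred0)) ?count_pred0 //.
  move=> s sp /=; case: eqP => [ls|]; rewrite ?andbF // andbT.
  by apply/negbTE/(alt_ok_last_lt PW _ sp); rewrite ?ls.
rewrite big_ltn; last lia.
rewrite count_last_max ?(ltnW WM) //; congr (_ + _).
by apply: eq_big_nat => l /andP[Wl lM]; apply: count_last_above_ndom => // x /PleW; lia.
Qed.

Lemma ndom_incr_succ Q W M : (forall x, Q x -> x < W) -> W <= M ->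
  ndom_incr Q W M.+1 + \sum_(W <= l < M.+1) ndom Q l = ndom_incr Q W M + ndom Q M.+1.
Proof.
move=> QltW WM; pose c l := count (fun s => alt_ok Q s && (last 0 s == l)) (perms M.+1).
have Ql l : W <= l -> forall x, Q x -> x < l by move=> Wl x /QltW; lia.
have splitW a : count a (perms M.+1) =
    \sum_(0 <= l < W) count (fun s => a s && (last 0 s == l)) (perms M.+1) +
    \sum_(W <= l < M.+1) count (fun s => a s && (last 0 s == l)) (perms M.+1).
  by rewrite (count_perms_by_last _ (ltn0Sn M)) (@big_cat_nat _ _ _ W) // leqW.
have -> : ndom Q M.+1 = \sum_(0 <= l < W) c l + \sum_(W <= l < M.+1) ndom Q l.
  rewrite /ndom splitW; congr (_ + _); apply: eq_big_nat => l /andP[Wl lM].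
  exact: count_last_above_ndom (Ql _ Wl) lM.
suff -> : ndom_incr Q W M.+1 = \sum_(0 <= l < W) c l + ndom_incr Q W M by lia.
rewrite /ndom_incr splitW; congr (_ + _).
  apply: eq_big_nat => l /andP[_ lW]; apply: eq_in_count => s sp /=.
  case: eqP => [ls|]; rewrite ?andbF // !andbT.
  by case: (boolP (alt_ok Q s)) => // oks; rewrite (incr_above_last_lt sp oks) ?ls.
rewrite big_nat_recr //= big1_seq ?add0n => [|l]; last first.
  rewrite mem_index_iota => /andP[Wl lM]; rewrite (eq_in_count (a2 := pred0)) ?count_pred0 //.
  move=> s sp /=; case: eqP => [ls|]; rewrite ?andbF // andbT.
  by apply/negbTE; rewrite negb_and (incr_above_last_ge sp) ?orbT ?ls ?Wl.
rewrite (count_last_above (incr_above W) (Ql _ WM)) // subnn /=.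
apply: eq_in_count => t tp; rewrite cats1 incr_above_rcons_max // => x.
by case/permsP: tp => _ ->.
Qed.

Lemma ndom_recurrence P W k : P W -> (forall x, P x -> x <= W) -> W <= k ->
  ndom P k.+3 + \sum_(W <= j < k.+2) ndom (predD1 P W) j =
  2 * ndom P k.+2 + ndom (predD1 P W) k.+2.
Proof.
move=> PW PleW Wk; have P'ltW x : predD1 P W x -> x < W by case/andP => xW /PleW; lia.
have Wk1 : W < k.+1 by lia.
have := ndom_incr_succ P'ltW (leqW Wk); have := ndom_succ PW PleW Wk1.
by have := ndom_succ PW PleW (leqW Wk1); rewrite big_nat_recr /=; lia.
Qed.

Import GRing.Theory.
Local Open Scope ring_scope.

Theorem proposition5 (n : nat) (A : pred nat) (w : nat) :
  (3 <= n)%N ->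
  (forall x, A x -> (1 <= x <= n.-1)%N) ->
  A w ->
  (forall x, A x -> (x <= w)%N) ->
  (1 < w < n.-1)%N ->
  ((f n A)%:Z =
     2 * (f n.-1 A)%:Z + (f n.-1 (predD1 A w))%:Z
     - \sum_(w.-1 <= j < n.-1) (f j (predD1 A w))%:Z).
Proof.
case: n => [|[|[|k]]] //= _ _ Aw Amax wn.
set P := fun x => A x.+1; have wE : w = w.-1.+1 by lia.
have PW : P w.-1 by rewrite /P -wE.
have PleW x : P x -> (x <= w.-1)%N by move/Amax; lia.
have Wk : (w.-1 <= k)%N by lia.
have fA' j : f j (predD1 A w) = ndom (predD1 P w.-1) j.
  by rewrite f_count; apply: eq_ndom => x; rewrite /= {1}wE eqSS.
have sumE : \sum_(w.-1 <= j < k.+2) (f j (predD1 A w))%:Z =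
            (\sum_(w.-1 <= j < k.+2) ndom (predD1 P w.-1) j)%N%:Z.
  by rewrite (big_morph Posz PoszD (erefl 0%:Z)); apply: eq_bigr => j _; rewrite fA'.
have := ndom_recurrence PW PleW Wk.
by rewrite sumE !fA' !f_count -/P; lia.
Qed.
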